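(* Let $(X,d_X,\mu_X)$ be an mm-space with $X=\operatorname{supp}\mu_X$, and assume the 1-measurement $\mathcal M(X;1)$ has a maximum with respect to the Lipschitz order. Then for any two points $x,y\in X$ with $d_X(x,y)=\operatorname{diam}X<\infty$, we have $d_X(x,z)+d_X(z,y)=\operatorname{diam}X$ for every point $z\in X$.
   Context: An mm-space is a triple $(X,d_X,\mu_X)$ where $(X,d_X)$ is a complete separable metric space and $\mu_X$ is a Borel probability measure on $X$. The 1-measurement is $\mathcal M(X;1):=\{f_*\mu_X \mid f:X\to\mathbb R \text{ is 1-Lipschitz}\}$. Two mm-spaces $X,Y$ are mm-isomorphic if there is an isometry $f:\operatorname{supp}\mu_X\to\operatorname{supp}\mu_Y$ with $f_*\mu_X=\mu_Y$. For mm-spaces, $Y\prec X$ (Lipschitz order) if there is a 1-Lipschitz map $f:\operatorname{supp}\mu_X\to\operatorname{supp}\mu_Y$ with $f_*\mu_X=\mu_Y$; a partial order on mm-isomorphism classes. For Borel probability measures $\mu,\nu$ on $\mathbb R$, $\mu\prec\nu$ means $(\mathbb R,|\cdot|,\mu)\prec(\mathbb R,|\cdot|,\nu)$. A maximum of $\mathcal M(X;1)$ is an element $\mu\in\mathcal M(X;1)$ with $\nu\prec\mu$ for all $\nu\in\mathcal M(X;1)$. *)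

From HB Require Import structures.
From mathcomp Require Import all_boot all_order all_algebra.
From mathcomp Require Import all_classical all_reals all_analysis.
Set Implicit Arguments. Unset Strict Implicit. Unset Printing Implicit Defensive.
Import Order.TTheory GRing.Theory Num.Theory.
Import numFieldNormedType.Exports.
Local Open Scope classical_set_scope.
Local Open Scope ring_scope.

Section MM.
Context {R : realType}.

Definition is_metric {X : Type} (dist : X -> X -> R) : Prop :=
  (forall x y, dist x y = 0 <-> x = y) /\
  (forall x y, dist x y = dist y x) /\
  (forall x y z, dist x z <= dist x y + dist y z).

Definition dcauchy {X : Type} (dist : X -> X -> R) (u : nat -> X) : Prop :=
  forall e, 0 < e -> exists N, forall m n, (N <= m)%N -> (N <= n)%N ->
    dist (u m) (u n) < e.

Definition dconverges {X : Type} (dist : X -> X -> R) (u : nat -> X) (l : X) : Prop :=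
  forall e, 0 < e -> exists N, forall n, (N <= n)%N -> dist (u n) l < e.

Definition dcomplete {X : Type} (dist : X -> X -> R) : Prop :=
  forall u, dcauchy dist u -> exists l, dconverges dist u l.

Definition dseparable {X : Type} (dist : X -> X -> R) : Prop :=
  exists s : nat -> X, forall x e, 0 < e -> exists n, dist x (s n) < e.

Definition dball {X : Type} (dist : X -> X -> R) (x : X) (r : R) : set X :=
  [set y | dist x y < r].

Definition dopen {X : Type} (dist : X -> X -> R) : set (set X) :=
  [set U | forall x, U x -> exists2 r, 0 < r & dball dist x r `<=` U].

Definition borel_for {d} {X : measurableType d} (dist : X -> X -> R) : Prop :=
  @measurable d X = <<s dopen dist >>.

Definition dsupp {d} {X : measurableType d} (dist : X -> X -> R)
  (mu : set X -> \bar R) : set X :=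
  [set x | forall r, 0 < r -> (0 < mu (dball dist x r))%E].

Definition lip1 {X : Type} (dist : X -> X -> R) (f : X -> R) : Prop :=
  forall x y, `|f x - f y| <= dist x y.

Definition pfwd {X : Type} (mu : set X -> \bar R) (f : X -> R) : set R -> \bar R :=
  fun A => mu (f @^-1` A).

Definition measurement1 {X : Type} (dist : X -> X -> R) (mu : set X -> \bar R)
  : set (set R -> \bar R) :=
  [set nu | exists f, lip1 dist f /\ nu = pfwd mu f].

Definition suppR (nu : set R -> \bar R) : set R :=
  [set a : R | forall r : R, 0 < r -> (0 < nu [set b : R | (`|b - a| < r)%R])%E].

(** Lipschitz order on measures on R: nu ≺ mu iff there is a 1-Lipschitz
    f : supp mu -> supp nu with f_* mu = nu (on Borel sets). *)
Definition lip_prec (nu mu : set R -> \bar R) : Prop :=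
  exists f : R -> R,
    (forall a b, suppR mu a -> suppR mu b -> `|f a - f b| <= `|a - b|) /\
    (forall a, suppR mu a -> suppR nu (f a)) /\
    (forall A : set R, measurable A -> nu A = mu (suppR mu `&` f @^-1` A)).

Definition is_maximum (M : set (set R -> \bar R)) (mu : set R -> \bar R) : Prop :=
  M mu /\ forall nu, M nu -> lip_prec nu mu.

Definition diam {X : Type} (dist : X -> X -> R) : \bar R :=
  ereal_sup [set (dist u v)%:E | u in [set: X] & v in [set: X]].

End MM.

From HB Require Import structures.
From mathcomp Require Import all_boot all_order all_algebra.
From mathcomp Require Import all_classical all_reals all_analysis.
From mathcomp Require Import lra.
Import Order.TTheory GRing.Theory Num.Theory.
Import numFieldNormedType.Exports.
Local Open Scope classical_set_scope.
Local Open Scope ring_scope.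

(** Let [D = d(x, y) = diam X] and let [m = F_* mu] be the maximum.  Every
    1-Lipschitz [G] with [G x = 0] and [G y = D] has [G_* mu = f_* m] for a map
    [f] that is 1-Lipschitz on [supp m]; the support of [m] lies in an interval
    [[a, a + D]] and [f] takes values arbitrarily close to [0] and to [D] on it,
    so [f] is forced to be either [r |-> r - a] or [r |-> a + D - r].  Apply
    this to [g = d(x, .)], [h = D - d(y, .)] and [k = (g + h) / 2]: two of the
    three have the same push-forward.  Since [h <= k <= g] pointwise and [mu]
    has full support, two ordered 1-Lipschitz functions with the same
    push-forward coincide, and either coincidence gives [g = h], i.e.
    [d(x, z) + d(z, y) = D]. *)

Section RealLine.
Context {R : realType}.

Lemma normr_cases (x : R) : (0 <= x /\ `|x| = x) \/ (x < 0 /\ `|x| = - x).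
Proof.
by case: (lerP 0 x) => h; [left; rewrite ger0_norm | right; rewrite ltr0_norm].
Qed.

Lemma forall_gt0_or {P Q : R -> Prop} :
  (forall e e', e <= e' -> P e -> P e') ->
  (forall e e', e <= e' -> Q e -> Q e') ->
  (forall e, 0 < e -> P e \/ Q e) ->
  (forall e, 0 < e -> P e) \/ (forall e, 0 < e -> Q e).
Proof.
move=> monoP monoQ PQ; have [allP|] := pselect (forall e, 0 < e -> P e).
  by left.
move=> /existsNP[e1 /not_implyP[e1_gt0 notP1]]; right => e e_gt0.
have min_gt0 : 0 < Num.min e e1 by rewrite lt_min e_gt0 e1_gt0.
case: (PQ _ min_gt0) => [/monoP Pe1|/monoQ]; last by apply; rewrite ge_min lexx.
by exfalso; apply/notP1/Pe1; rewrite ge_min lexx orbT.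
Qed.

Section ShiftOrFlip.
Context {phi : R -> R} {S : set R} {a D : R}.
Hypothesis S_itv : forall r, S r -> a <= r /\ r <= a + D.
Hypothesis phi_lip : forall s t, S s -> S t -> `|phi s - phi t| <= `|s - t|.

(* [phi s < e] and [phi t > D - e] force [|s - t| > D - 2 e], so [s] and [t]
   lie within [2 e] of the two ends of [[a, a + D]]. *)
Lemma shift_or_flip_approx {e} :
  0 < e -> (exists2 s, S s & phi s < e) -> (exists2 t, S t & D - e < phi t) ->
  (forall r, S r -> `|phi r - (r - a)| <= 3 * e) \/
  (forall r, S r -> `|phi r - (a + D - r)| <= 3 * e).
Proof.
move=> e_gt0 [s Ss phis] [t St phit].
have := phi_lip _ _ St Ss; have [? ?] := S_itv _ Ss; have [? ?] := S_itv _ St.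
case: (lerP s t) => st phi_ts; [left|right] => r Sr; have [? ?] := S_itv _ Sr;
  have := phi_lip _ _ Sr Ss; have := phi_lip _ _ Sr St;
  move: phi_ts; rewrite !ler_norml;
  case: (normr_cases (r - t)) => [[? ->]|[? ->]];
  case: (normr_cases (r - s)) => [[? ->]|[? ->]];
  move=> /andP[? ?] /andP[? ?] /andP[? ?]; apply/andP; split; lra.
Qed.

Lemma shift_or_flip :
  (forall e, 0 < e -> exists2 s, S s & phi s < e) ->
  (forall e, 0 < e -> exists2 t, S t & D - e < phi t) ->
  (forall r, S r -> phi r = r - a) \/ (forall r, S r -> phi r = a + D - r).
Proof.
move=> near0 nearD.
pose close (psi : R -> R) e := forall r, S r -> `|phi r - psi r| <= e.
have close_mono psi e e' : e <= e' -> close psi e -> close psi e'.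
  by move=> le_ee' cl r Sr; apply: le_trans le_ee'; apply: cl.
have close_eq psi : (forall e, 0 < e -> close psi e) -> forall r, S r -> phi r = psi r.
  move=> cl r Sr; apply/eqP; rewrite -subr_eq0 -normr_le0.
  by apply/ler_addgt0Pr => e e_gt0; rewrite add0r; apply: cl.
have [] := forall_gt0_or (close_mono (fun r => r - a)) (close_mono (fun r => a + D - r)).
- move=> e e_gt0; have e3_gt0 : 0 < e / 3 by rewrite divr_gt0.
  have := shift_or_flip_approx e3_gt0 (near0 _ e3_gt0) (nearD _ e3_gt0).
  by rewrite mulrC -mulrA mulVf ?mulr1.
- by left; apply: close_eq.
- by right; apply: close_eq.
Qed.

End ShiftOrFlip.
End RealLine.

Lemma open_distr_lt {R : realType} (c r : R) : open [set b : R | `|b - c| < r].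
Proof.
have -> : [set b : R | `|b - c| < r] = ball c r.
  by apply/seteqP; split => b; rewrite /ball /= distrC.
exact: ball_open.
Qed.

Section LipschitzPushforward.
Context {R : realType} {d : measure_display} {X : measurableType d}.
Context {dist : X -> X -> R} {mu : probability X R}.
Hypothesis dist_metric : is_metric dist.

Lemma lip1_dist z : lip1 dist (dist z).
Proof.
have [_ [dist_sym dist_tri]] := dist_metric.
move=> u v; rewrite ler_norml; apply/andP; split.
- by have := dist_tri z u v; lra.
- by have := dist_tri z v u; rewrite (dist_sym v u); lra.
Qed.

Lemma lip1_preimage_dopen {G : X -> R} {A : set R} :
  lip1 dist G -> open A -> dopen dist (G @^-1` A).
Proof.
move=> G_lip A_open u Au.
have /nbhs_ballP[r r_gt0 ballA] : nbhs (G u) A by apply: open_nbhs_nbhs.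
exists r => // v duv; apply: ballA; rewrite /ball /=.
exact: le_lt_trans (G_lip u v) duv.
Qed.

Hypothesis dist_borel : borel_for dist.

Lemma lip1_preimage_open_measurable {G : X -> R} {A : set R} :
  lip1 dist G -> open A -> measurable (G @^-1` A).
Proof.
move=> G_lip A_open; rewrite dist_borel; apply: sub_sigma_algebra.
exact: lip1_preimage_dopen.
Qed.

Lemma dball_measurable z r : measurable (dball dist z r).
Proof. exact: lip1_preimage_open_measurable (lip1_dist z) (@open_lt R r). Qed.

Hypothesis mu_supp : dsupp dist mu = [set: X].

Lemma dball_measure_gt0 z {r} : 0 < r -> (0 < mu (dball dist z r))%E.
Proof.
have z_supp : dsupp dist mu z by rewrite mu_supp.
exact: z_supp.
Qed.

Lemma lip1_suppR_pfwd {G : X -> R} z : lip1 dist G -> suppR (pfwd mu G) (G z).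
Proof.
move=> G_lip r r_gt0; apply: (lt_le_trans (dball_measure_gt0 z r_gt0)).
apply: le_measure; rewrite ?inE.
- exact: dball_measurable.
- exact: lip1_preimage_open_measurable G_lip (open_distr_lt _ _).
- move=> u dzu /=; apply: le_lt_trans (G_lip u z) _.
  by have [_ [-> _]] := dist_metric.
Qed.

(* With [t] strictly between [G1 z] and [G2 z], the event [G1 < t] exceeds the
   event [G2 < t] by a ball around [z], which has positive measure. *)
Lemma lip1_le_pfwd_eq {G1 G2 : X -> R} :
  lip1 dist G1 -> lip1 dist G2 -> (forall u, G1 u <= G2 u) ->
  (forall A, measurable A -> pfwd mu G1 A = pfwd mu G2 A) -> G1 =1 G2.
Proof.
move=> G1_lip G2_lip G12 pfwd12 z.
have [_ [dist_sym _]] := dist_metric.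
apply/eqP; rewrite eq_le G12 /= leNgt; apply/negP => lt12.
pose t := (G1 z + G2 z) / 2; pose delta := (G2 z - G1 z) / 2.
have delta_gt0 : 0 < delta by rewrite divr_gt0 // subr_gt0.
pose A : set R := [set b | b < t].
have mA : measurable A := measurable_realfun.open_measurable (@open_lt R t).
have mA1 := lip1_preimage_open_measurable G1_lip (@open_lt R t).
have mA2 := lip1_preimage_open_measurable G2_lip (@open_lt R t).
have ball_sub : dball dist z delta `<=` G1 @^-1` A `\` G2 @^-1` A.
  move=> u dzu; have := G1_lip u z; have := G2_lip u z.
  rewrite (dist_sym u z) !ler_norml /A /= => /andP[? ?] /andP[? ?].
  by split; [|apply/negP; rewrite -leNgt]; move: dzu; rewrite /dball /= /t /delta; lra.
have diff_gt0 : (0 < mu (G1 @^-1` A `\` G2 @^-1` A))%E.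
  apply: (lt_le_trans (dball_measure_gt0 z delta_gt0)).
  by apply: le_measure; rewrite ?inE //; [exact: dball_measurable | exact: measurableD].
have split1 : mu (G1 @^-1` A) = (mu (G2 @^-1` A) + mu (G1 @^-1` A `\` G2 @^-1` A))%E.
  rewrite -measureU //; [|exact: measurableD|].
  - by rewrite setDUK // => u /=; apply: le_lt_trans.
  - by apply/seteqP; split => // u /= [? []].
have := pfwd12 A mA; rewrite /pfwd split1 => E.
have : (mu (G2 @^-1` A) < mu (G2 @^-1` A) + mu (G1 @^-1` A `\` G2 @^-1` A))%E.
  by rewrite lteDl ?fin_num_measure.
by rewrite E ltxx.
Qed.

End LipschitzPushforward.

Section Lip1Closure.
Context {R : realType} {T : Type}.
Context {dist : T -> T -> R}.

Lemma lip1_subl c {G : T -> R} : lip1 dist G -> lip1 dist (fun u => c - G u).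
Proof.
move=> G_lip u v; have := G_lip u v; rewrite !ler_norml => /andP[? ?].
by apply/andP; split; lra.
Qed.

Lemma lip1_mid {G1 G2 : T -> R} :
  lip1 dist G1 -> lip1 dist G2 -> lip1 dist (fun u => (G1 u + G2 u) / 2).
Proof.
move=> G1_lip G2_lip u v; have := G1_lip u v; have := G2_lip u v.
by rewrite !ler_norml => /andP[? ?] /andP[? ?]; apply/andP; split; lra.
Qed.

End Lip1Closure.

Section SupportOfPushforward.
Context {R : realType} {T : Type}.
Context {nu : set T -> \bar R} {F : T -> R}.
Hypothesis nu0 : nu set0 = 0%E.

Lemma suppR_pfwd_approx {s e} :
  suppR (pfwd nu F) s -> 0 < e -> exists u, `|F u - s| < e.
Proof.
move=> s_supp e_gt0; have := s_supp e e_gt0; apply: contraPP => no_u; rewrite /pfwd.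
suff -> : F @^-1` [set b | `|b - s| < e] = set0 by rewrite nu0 ltxx.
by apply/seteqP; split => // u /= Fu; apply: no_u; exists u.
Qed.

Lemma suppR_pfwd_sub_itv {dist : T -> T -> R} {D} :
  lip1 dist F -> (forall u v, dist u v <= D) -> (exists s0, suppR (pfwd nu F) s0) ->
  exists a, forall r, suppR (pfwd nu F) r -> a <= r /\ r <= a + D.
Proof.
move=> F_lip dist_le [s0 s0_supp].
have diam_le s t : suppR (pfwd nu F) s -> suppR (pfwd nu F) t -> s - t <= D.
  move=> s_supp t_supp; apply/ler_addgt0Pr => e e_gt0.
  have e2_gt0 : 0 < e / 2 by rewrite divr_gt0.
  have [u] := suppR_pfwd_approx s_supp e2_gt0.
  have [v] := suppR_pfwd_approx t_supp e2_gt0.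
  have := F_lip u v; have := dist_le u v.
  by rewrite !ltr_norml ler_norml => ? /andP[? ?] /andP[? ?] /andP[? ?]; lra.
have lbS : has_lbound (suppR (pfwd nu F)).
  by exists (s0 - D) => r r_supp; have := diam_le s0 r s0_supp r_supp; lra.
exists (inf (suppR (pfwd nu F))) => r r_supp; split; first exact: ge_inf.
suff : r - D <= inf (suppR (pfwd nu F)) by lra.
apply: lb_le_inf; first by exists s0.
by move=> s s_supp; have := diam_le r s r_supp s_supp; lra.
Qed.

End SupportOfPushforward.

Definition transport {R : realType} (m : set R -> \bar R) (f : R -> R) :
    set R -> \bar R :=
  fun A => m (suppR m `&` f @^-1` A).

Section Transport.
Context {R : realType}.
Context {m : set R -> \bar R}.

Lemma eq_transport {f1 f2 : R -> R} :
  (forall r, suppR m r -> f1 r = f2 r) -> transport m f1 = transport m f2.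
Proof.
move=> f12; apply/funext => A; congr m.
by apply/seteqP; split => r /= [r_supp fA]; split; rewrite // ?f12 // -f12.
Qed.

Hypothesis m0 : m set0 = 0%E.

Lemma transport_suppR_approx {nu : set R -> \bar R} {f c e} :
  (forall A, measurable A -> nu A = transport m f A) ->
  suppR nu c -> 0 < e -> exists2 s, suppR m s & `|f s - c| < e.
Proof.
move=> nu_f c_supp e_gt0; have := c_supp e e_gt0.
rewrite nu_f; last by apply: measurable_realfun.open_measurable; exact: open_distr_lt.
apply: contraPP => no_s; rewrite /transport.
suff -> : suppR m `&` f @^-1` [set b | `|b - c| < e] = set0.
  by rewrite m0 ltxx.
by apply/seteqP; split => // r /= [r_supp fr]; apply: no_s; exists r.
Qed.

End Transport.

Section MaximumRigidity.
Context {R : realType} {d : measure_display} {X : measurableType d}.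
Context {dist : X -> X -> R} {mu : probability X R}.
Hypotheses (dist_metric : is_metric dist) (dist_borel : borel_for dist)
  (mu_supp : dsupp dist mu = [set: X]).
Context {F : X -> R} {x y : X} {a D : R}.
Hypothesis F_max : forall nu, measurement1 dist mu nu -> lip_prec nu (pfwd mu F).
Hypothesis F_supp_itv : forall r, suppR (pfwd mu F) r -> a <= r /\ r <= a + D.

Lemma lip1_pfwd_shift_or_flip {G : X -> R} :
  lip1 dist G -> G x = 0 -> G y = D ->
  (forall A, measurable A -> pfwd mu G A = transport (pfwd mu F) (fun r => r - a) A) \/
  (forall A, measurable A -> pfwd mu G A = transport (pfwd mu F) (fun r => a + D - r) A).
Proof.
move=> G_lip Gx Gy.
have [f [f_lip [_ G_f]]] := F_max _ (ex_intro _ G (conj G_lip erefl)).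
have m0 : pfwd mu F set0 = 0%E by rewrite /pfwd preimage_set0 measure0.
have near z e : 0 < e -> exists2 s, suppR (pfwd mu F) s & `|f s - G z| < e.
  exact: (transport_suppR_approx m0 G_f
    (lip1_suppR_pfwd dist_metric dist_borel mu_supp z G_lip)).
have near0 e : 0 < e -> exists2 s, suppR (pfwd mu F) s & f s < e.
  move=> /(near x)[s s_supp]; rewrite Gx subr0 ltr_norml => /andP[_ ?].
  by exists s.
have nearD e : 0 < e -> exists2 s, suppR (pfwd mu F) s & D - e < f s.
  move=> /(near y)[s s_supp]; rewrite Gy ltr_norml => /andP[? _].
  by exists s => //; lra.
have [f_shift|f_flip] := shift_or_flip F_supp_itv f_lip near0 nearD.
- by left => A mA; rewrite G_f // -(eq_transport f_shift).
- by right => A mA; rewrite G_f // -(eq_transport f_flip).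
Qed.

Hypothesis xy_D : dist x y = D.

Lemma dist_triangle_eq z : dist x z + dist z y = dist x y.
Proof.
have [dist0 [dist_sym dist_tri]] := dist_metric.
pose g u := dist x u; pose h u := D - dist y u; pose k u := (g u + h u) / 2.
have g_lip : lip1 dist g := lip1_dist dist_metric x.
have h_lip : lip1 dist h := lip1_subl D (lip1_dist dist_metric y).
have k_lip : lip1 dist k := lip1_mid g_lip h_lip.
have hg u : h u <= g u by have := dist_tri x u y; rewrite /h /g xy_D (dist_sym u y); lra.
have hk u : h u <= k u by have := hg u; rewrite /k; lra.
have kg u : k u <= g u by have := hg u; rewrite /k; lra.
have [gx gy] : g x = 0 /\ g y = D by split; [apply/dist0 | exact: xy_D].
have y0 : dist y y = 0 by apply/dist0.
have [hx hy] : h x = 0 /\ h y = D by rewrite /h (dist_sym y x) xy_D subrr y0 subr0.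
have [kx ky] : k x = 0 /\ k y = D by rewrite /k gx gy hx hy; split; lra.
have from_hg : (forall A, measurable A -> pfwd mu h A = pfwd mu g A) -> g z = h z.
  by move/(lip1_le_pfwd_eq dist_metric dist_borel mu_supp h_lip g_lip hg)/(_ z).
have from_hk : (forall A, measurable A -> pfwd mu h A = pfwd mu k A) -> g z = h z.
  move/(lip1_le_pfwd_eq dist_metric dist_borel mu_supp h_lip k_lip hk)/(_ z).
  by rewrite /k; lra.
have from_kg : (forall A, measurable A -> pfwd mu k A = pfwd mu g A) -> g z = h z.
  move/(lip1_le_pfwd_eq dist_metric dist_borel mu_supp k_lip g_lip kg)/(_ z).
  by rewrite /k; lra.
suff : g z = h z by rewrite /g /h xy_D (dist_sym z y); lra.
case: (lip1_pfwd_shift_or_flip g_lip gx gy) => Eg;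
  case: (lip1_pfwd_shift_or_flip h_lip hx hy) => Eh;
  case: (lip1_pfwd_shift_or_flip k_lip kx ky) => Ek;
  first [ apply: from_hg => A mA; by rewrite Eh ?Eg
        | apply: from_hk => A mA; by rewrite Eh ?Ek
        | apply: from_kg => A mA; by rewrite Ek ?Eg ].
Qed.

End MaximumRigidity.

Theorem theorem1p4 (R : realType) (d : measure_display) (X : measurableType d)
  (dist : X -> X -> R) (mu : probability X R)
  (Hmetric : is_metric dist) (Hcomplete : dcomplete dist)
  (Hsep : dseparable dist) (Hborel : borel_for dist)
  (Hsupp : dsupp dist mu = [set: X])
  (Hmax : exists m, is_maximum (measurement1 dist mu) m)
  (x y : X) (Hdiam : (dist x y)%:E = diam dist) :
  forall z : X, (dist x z + dist z y)%:E = diam dist.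
Proof.
move=> z; rewrite -Hdiam; congr EFin.
have dist_le u v : dist u v <= dist x y.
  rewrite -lee_fin Hdiam; apply: ereal_sup_ubound.
  by exists u => //; exists v.
have [_ [[F [F_lip ->]] F_max]] := Hmax.
have [a F_supp_itv] := suppR_pfwd_sub_itv (measure0 mu) F_lip dist_le
  (ex_intro _ (F x) (lip1_suppR_pfwd Hmetric Hborel Hsupp x F_lip)).
exact: (dist_triangle_eq Hmetric Hborel Hsupp F_max F_supp_itv erefl).
Qed.
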